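(* Let $\lambda=(\lambda_1,\dots,\lambda_n)\in\mathbb{R}^n$ with $\lambda_1+\dots+\lambda_n>0$, let $\delta=\delta(\lambda)$, and let $J\subset\{1,\dots,n\}$ with $s_J(\lambda)/|J|=\delta$ and $|J|=N(\lambda)$. Define $\lambda'\in\mathbb{R}^n$ by $\lambda'_i=\lambda_i$ if $i\notin J$ and $\lambda'_i=\lambda_i-\delta$ if $i\in J$. Let $\mathcal{P}'_{ord}(n)$ be the set of $P=(I_1,\dots,I_k)\in\mathcal{P}_{ord}(n)$ for which some $r\in\{1,\dots,k\}$ satisfies $J=I_1\cup\dots\cup I_r$, and $\mathcal{P}'(n)$ its image in $\mathcal{P}(n)$. Then: (i) For every $K\subset\{1,\dots,n\}$ with $K\neq J$, $s_K(\lambda')>0$ if and only if $s_K(\lambda)>0$. (ii) $\mathcal{P}_{ord}(\lambda)=\mathcal{P}_{ord}(\lambda')\sqcup(\mathcal{P}'_{ord}(n)\cap\mathcal{P}_{ord}(\lambda))$ and $\mathcal{P}(\lambda)=\mathcal{P}(\lambda')\sqcup(\mathcal{P}'(n)\cap\mathcal{P}(\lambda))$; in particular $|\mathcal{P}_{ord}(\lambda')|<|\mathcal{P}_{ord}(\lambda)|$ and $|\mathcal{P}(\lambda')|<|\mathcal{P}(\lambda)|$. Let $m=|J|$, write $J=\{i_1<\dots<i_m\}$ and $K:=\{1,\dots,n\}\setminus J=\{j_1<\dots<j_{n-m}\}$, $u_J:J\to\{1,\dots,m\}$, $i_r\mapsto r$, $u_K:K\to\{1,\dots,n-m\}$, $j_r\mapsto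 r$; let $\sigma\in\mathfrak{S}_n$ with $\sigma(i_r)=r$ and $\sigma(j_r)=m+r$, and $\varepsilon_0=\mathrm{sgn}(\sigma)$. Define $\varphi_{ord}:\mathcal{P}'_{ord}(n)\to\mathcal{P}_{ord}(m)\times\mathcal{P}_{ord}(n-m)$ by $\varphi_{ord}(I_1,\dots,I_k)=((u_J(I_1),\dots,u_J(I_r)),(u_K(I_{r+1}),\dots,u_K(I_k)))$ where $I_1\cup\dots\cup I_r=J$, and similarly $\varphi:\mathcal{P}'(n)\to\mathcal{P}(m)\times\mathcal{P}(n-m)$. Let $\mu=(\lambda_{i_1},\dots,\lambda_{i_m})\in\mathbb{R}^m$ and $\nu=(\lambda_{j_1},\dots,\lambda_{j_{n-m}})\in\mathbb{R}^{n-m}$. Then: (iii) For every $P\in\mathcal{P}'_{ord}(n)$, if $\varphi_{ord}(P)=(P_1,P_2)$ then $\varepsilon(P)=\varepsilon_0\varepsilon(P_1)\varepsilon(P_2)$ and $\varepsilon'(P)=\varepsilon'(P_1)\varepsilon'(P_2)$. (iv) $\varphi_{ord}$ induces a bijection $\mathcal{P}'_{ord}(n)\cap\mathcal{P}_{ord}(\lambda)\to\mathcal{P}_{ord}(\mu)\times\mathcal{P}_{ord}(\nu)$, and $\varphi$ induces a bijection $\mathcal{P}'(n)\cap\mathcal{P}(\lambda)\to\mathcal{P}(\mu)\times\mathcal{P}(\nu)$.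
   Context: $s_J(\lambda)=\sum_{i\in J}\lambda_i$. $\delta(\lambda)$ is the minimum of $s_J(\lambda)/|J|$ over subsets $J$ with $s_J(\lambda)>0$; $N(\lambda)$ is the minimum of $|J|$ over subsets $J$ with $s_J(\lambda)/|J|=\delta(\lambda)$. $\mathcal{P}(n)$ (resp. $\mathcal{P}_{ord}(n)$) is the set of partitions (resp. ordered partitions) of $\{1,\dots,n\}$ into nonempty blocks. For $\lambda\in\mathbb{R}^n$: $\mathcal{P}_{ord}(\lambda)$ is the set of $(I_1,\dots,I_k)$ with $s_{I_1}(\lambda)+\dots+s_{I_i}(\lambda)>0$ for all $i$, and $\mathcal{P}(\lambda)$ the set of partitions all of whose blocks have $s_{I_\alpha}(\lambda)>0$. For $P=(I_1,\dots,I_k)$ with $n_i=|I_i|$, $\varepsilon(P)=\mathrm{sgn}(\sigma_P)$ with $\sigma_P$ the unique permutation such that $\sigma_P^{-1}$ maps $\{n_1+\dots+n_i+1,\dots,n_1+\dots+n_{i+1}\}$ increasingly onto $I_{i+1}$; $\varepsilon'(P)=(-1)^{\frac12\sum_i|I_i|(|I_i|-1)}$. *)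

(* Indices {1,...,n} are represented by 'I_n = {0,...,n-1}. *)
From mathcomp Require Import all_boot all_order all_algebra all_fingroup.
Set Implicit Arguments. Unset Strict Implicit. Unset Printing Implicit Defensive.
Import Order.TTheory GRing.Theory Num.Theory.
Local Open Scope ring_scope.

Definition sJ (R : numDomainType) (n : nat) (J : {set 'I_n}) (lam : 'I_n -> R) : R :=
  \sum_(i in J) lam i.

Definition avg (R : numFieldType) n (J : {set 'I_n}) (lam : 'I_n -> R) : R :=
  sJ J lam / #|J|%:R.

Definition is_delta (R : numFieldType) n (lam : 'I_n -> R) (d : R) : Prop :=
  (exists J : {set 'I_n}, 0 < sJ J lam /\ avg J lam = d) /\
  (forall J : {set 'I_n}, 0 < sJ J lam -> d <= avg J lam).

Definition ordpart n (s : seq {set 'I_n}) : bool :=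
  all (fun I => I != set0) s &&
  pairwise (fun I1 I2 : {set 'I_n} => [disjoint I1 & I2]) s &&
  (\bigcup_(I <- s) (I : {set 'I_n}) == [set: 'I_n]).

Definition ordpart_lam (R : numDomainType) n (lam : 'I_n -> R)
    (s : seq {set 'I_n}) : bool :=
  ordpart s && all (fun i => 0 < \sum_(I <- take i s) sJ I lam) (iota 1 (size s)).

Definition ordpart' n (J : {set 'I_n}) (s : seq {set 'I_n}) : bool :=
  ordpart s && has (fun r => \bigcup_(I <- take r s) (I : {set 'I_n}) == J) (iota 1 (size s)).

(* finite type containing all ordered partitions of 'I_n (they have at most n
   blocks): a length k <= n and a k-tuple of subsets *)
Definition OP n := {k : 'I_n.+1 & k.-tuple {set 'I_n}}.
Definition blocks n (P : OP n) : seq {set 'I_n} := tagged P.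

Definition PordS (R : numDomainType) n (lam : 'I_n -> R) : {set OP n} :=
  [set P : OP n | ordpart_lam lam (blocks P)].
Definition Pord'S n (J : {set 'I_n}) : {set OP n} :=
  [set P : OP n | ordpart' J (blocks P)].

Definition part_lam (R : numDomainType) n (lam : 'I_n -> R)
    (P : {set {set 'I_n}}) : bool :=
  partition P [set: 'I_n] && [forall I in P, 0 < sJ I lam].
Definition PS (R : numDomainType) n (lam : 'I_n -> R) : {set {set {set 'I_n}}} :=
  [set P | part_lam lam P].
Definition P'S n (J : {set 'I_n}) : {set {set {set 'I_n}}} :=
  [set [set:: blocks Q] | Q in Pord'S J].

Definition cutJ n (J : {set 'I_n}) (s : seq {set 'I_n}) : nat :=
  find (fun r => \bigcup_(I <- take r s) (I : {set 'I_n}) == J) (iota 0 (size s).+1).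

(* phi_ord, with u_J(I) = iJ^{-1}(I), u_K(I) = jK^{-1}(I) *)
Definition phi_ord n m m' (J : {set 'I_n}) (iJ : 'I_m -> 'I_n) (jK : 'I_m' -> 'I_n)
    (s : seq {set 'I_n}) : seq {set 'I_m} * seq {set 'I_m'} :=
  (map (fun I : {set 'I_n} => iJ @^-1: I) (take (cutJ J s) s),
   map (fun I : {set 'I_n} => jK @^-1: I) (drop (cutJ J s) s)).

Definition phi n m m' (J : {set 'I_n}) (iJ : 'I_m -> 'I_n) (jK : 'I_m' -> 'I_n)
    (P : {set {set 'I_n}}) : {set {set 'I_m}} * {set {set 'I_m'}} :=
  ((fun I : {set 'I_n} => iJ @^-1: I) @: [set I in P | I \subset J],
   (fun I : {set 'I_n} => jK @^-1: I) @: [set I in P | I \subset ~: J]).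

(* sigma_P: x in I_{b+1} of rank t in I_{b+1} (0-based) goes to
   n_1 + ... + n_b + t (0-based positions) *)
Definition blk_of n (s : seq {set 'I_n}) (x : 'I_n) : nat := find (fun I : {set 'I_n} => x \in I) s.
Definition posP n (s : seq {set 'I_n}) (x : 'I_n) : nat :=
  (\sum_(I <- take (blk_of s x) s) #|I| +
   #|[set y in nth set0 s (blk_of s x) | (y < x)%N]|)%N.
Definition sigmaP_fun n (s : seq {set 'I_n}) (x : 'I_n) : 'I_n := insubd x (posP s x).
Definition sigmaP n (s : seq {set 'I_n}) : {perm 'I_n} :=
  match injectiveP (sigmaP_fun s) with
  | ReflectT inj => perm inj
  | ReflectF _ => 1%g
  end.

Definition eps n (s : seq {set 'I_n}) : int := (-1) ^+ odd_perm (sigmaP s).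
Definition eps' n (s : seq {set 'I_n}) : int := (-1) ^+ (\sum_(I <- s) 'C(#|I|, 2))%N.

(* Subtracting delta on J lowers s_K by |K :&: J| * delta.  For K != J this keeps the sign of
   s_K: if K is a proper subset of J, minimality of |J| among the sets of average delta forces
   s_K > |K| * delta; otherwise |K :&: J| < |K| and s_K >= |K| * delta.  As s_J(lam') = 0, an
   (ordered) partition is admissible for lam' exactly when it is admissible for lam and J is
   not a union of its first blocks, which gives (ii).
   When J = I_1 u ... u I_r, the first r blocks lie in J and the others in its complement, so
   pulling them back along the increasing enumerations of J and of its complement is inverse
   to gluing.  Positivity of the later prefix sums reduces to s_V(lam) > 0 for nonempty V
   outside J, because s_(J u V)(lam') = s_V(lam).  Finally sigma_P = (sigma_P1 (+) sigma_P2) o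
   sigma, and the sign of a block-diagonal permutation is the product of the signs of its
   blocks. *)

From mathcomp Require Import all_boot all_order all_algebra all_fingroup.
Set Implicit Arguments. Unset Strict Implicit. Unset Printing Implicit Defensive.
Import Order.TTheory GRing.Theory Num.Theory.

Local Notation pairwise_disjoint := (pairwise (fun A B : {set _} => [disjoint A & B])).

Section SeqOfSets.
Variable T : finType.
Implicit Types (A : {set T}) (t : seq {set T}).

Lemma mem_bigcup_seq (S : Type) (F : S -> {set T}) (r : seq S) x :
  (x \in \bigcup_(i <- r) F i) = has (fun i => x \in F i) r.
Proof. by elim: r => [|a r IH]; rewrite ?big_nil ?big_cons inE // IH. Qed.

Lemma disjoint_bigcup_seq A t :
  all (fun B : {set T} => [disjoint A & B]) t -> [disjoint A & \bigcup_(B <- t) B].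
Proof.
move=> /allP dA; rewrite -setI_eq0; apply/set0Pn => -[x].
rewrite !inE mem_bigcup_seq => /andP[xA /hasP[B Bt xB]].
by move/disjointFr: (dA B Bt) => /(_ x xA); rewrite xB.
Qed.

Lemma big_bigcup_seq (R : Type) (idx : R) (op : Monoid.com_law idx) (F : T -> R) t :
  pairwise_disjoint t ->
  \big[op/idx]_(x in \bigcup_(A <- t) A) F x = \big[op/idx]_(A <- t) \big[op/idx]_(x in A) F x.
Proof.
elim: t => [|A t IH]; first by rewrite !big_nil big_set0.
rewrite /= => /andP[dA dt]; rewrite !big_cons -IH // -bigU ?disjoint_bigcup_seq //.
by apply: eq_bigl => x; rewrite !inE.
Qed.

Lemma card_bigcup_seq t : pairwise_disjoint t -> #|\bigcup_(A <- t) A| = (\sum_(A <- t) #|A|)%N.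
Proof.
move=> dt; rewrite -sum1_card big_bigcup_seq //.
by apply: eq_bigr => A _; rewrite sum1_card.
Qed.

Lemma cover_set_seq t : cover [set:: t] = \bigcup_(A <- t) A.
Proof. by rewrite bigcup_seq; apply: eq_bigl => A; rewrite inE. Qed.

Lemma imset_set_seq (T' : finType) (f : {set T} -> T') t : f @: [set:: t] = [set:: map f t].
Proof.
apply/setP => y; rewrite inE; apply/imsetP/mapP => -[A At ->]; exists A => //.
  by rewrite inE in At.
by rewrite inE.
Qed.

Lemma set_seq_cat t1 t2 : [set:: t1 ++ t2] = [set:: t1] :|: [set:: t2].
Proof. by apply/setP => A; rewrite !inE mem_cat. Qed.

Lemma enum_set (P : {set {set T}}) : [set:: enum P] = P.
Proof. by apply/setP => A; rewrite inE mem_enum. Qed.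

End SeqOfSets.

Lemma setD_split (T : finType) (A B : {set T}) :
  A = A :\: B :|: B :&: A /\ [disjoint A :\: B & B :&: A].
Proof.
split; first by rewrite setUC setIC setID.
by rewrite -setI_eq0; apply/eqP/setP => x; rewrite !inE; case: (x \in B); rewrite ?andbF.
Qed.

Lemma card_setD_lt (T : finType) (A B : {set T}) : B :&: A != set0 -> (#|A :\: B| < #|A|)%N.
Proof. by rewrite -card_gt0 -(cardsID B A) -{1}[#|A :\: B|]add0n ltn_add2r setIC. Qed.

Lemma sumr_seq_gt0 (R : numDomainType) (T : eqType) (r : seq T) (F : T -> R) :
  r != [::] -> {in r, forall x, 0 < F x}%R -> (0 < \sum_(x <- r) F x)%R.
Proof.
case: r => // x r _ Fr_gt0; rewrite big_cons ltr_wpDr ?Fr_gt0 ?mem_head // big_seq.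
by rewrite sumr_ge0 // => y yr; rewrite ltW // Fr_gt0 // inE yr orbT.
Qed.

Lemma imset_setT (aT rT : finType) (f : aT -> rT) : f @: setT = [set f x | x : aT].
Proof. by apply/setP => y; apply/imsetP/imsetP => -[x _ ->]; exists x. Qed.

Lemma bigcup_map_imset (aT rT : finType) (f : aT -> rT) (t : seq {set aT}) :
  \bigcup_(B <- map (fun A : {set aT} => f @: A) t) B = f @: \bigcup_(A <- t) A.
Proof. by rewrite (big_morph (fun A : {set aT} => f @: A) (imsetU f) (imset0 f)) big_map. Qed.

Lemma bigcup_map_preimset (aT rT : finType) (f : aT -> rT) (t : seq {set rT}) :
  \bigcup_(B <- map (fun A : {set rT} => f @^-1: A) t) B = f @^-1: \bigcup_(A <- t) A.
Proof.
by rewrite (big_morph (fun A : {set rT} => f @^-1: A) (preimsetU f) (preimset0 f)) big_map.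
Qed.

Section OrderedPartitions.
Variable n : nat.
Implicit Types (s t : seq {set 'I_n}) (J : {set 'I_n}).

Definition prefix_union s i := \bigcup_(I <- take i s) I.

Lemma ordpartP s :
  reflect [/\ {in s, forall I, I != set0}, pairwise_disjoint s & \bigcup_(I <- s) I = setT]
          (ordpart s).
Proof.
by apply: (iffP andP) => [[/andP[/allP ? ?] /eqP ?] | [/allP ? ? ->]]; split=> //; apply/andP.
Qed.

Lemma prefix_union_catl s t i : (i <= size s)%N -> prefix_union (s ++ t) i = prefix_union s i.
Proof. by move=> i_s; rewrite /prefix_union takel_cat. Qed.

Lemma prefix_union_cat s t i :
  prefix_union (s ++ t) (size s + i) = \bigcup_(I <- s) I :|: prefix_union t i.
Proof. by rewrite /prefix_union takeD take_size_cat // drop_size_cat // big_cat. Qed.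

Lemma ordpart_size s : ordpart s -> (size s <= n)%N.
Proof.
case/ordpartP => nz dj cup; rewrite -[X in (_ <= X)%N]card_ord -cardsT -cup.
rewrite card_bigcup_seq // -sum1_size !big_seq; apply: leq_sum => I /nz.
by rewrite card_gt0.
Qed.

Lemma ordpart_blk_of s x : ordpart s ->
  (blk_of s x < size s)%N /\ x \in nth set0 s (blk_of s x).
Proof.
case/ordpartP => _ _ cup.
have : x \in \bigcup_(I <- s) I by rewrite cup inE.
by rewrite mem_bigcup_seq => xs; split; [rewrite -has_find | exact: (nth_find set0 xs)].
Qed.

Lemma prefix_union_mono s i j : (i <= j)%N -> prefix_union s i \subset prefix_union s j.
Proof.
move=> ij; apply/subsetP => x; rewrite !mem_bigcup_seq -(take_takel s ij).
by case/hasP => I /mem_take Ij xI; apply/hasP; exists I.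
Qed.

Lemma prefix_union_neq s i j : ordpart s -> (i < j)%N -> (j <= size s)%N ->
  prefix_union s i != prefix_union s j.
Proof.
case/ordpartP => nz dj _ ij js; have is_ := leq_trans ij js.
have /set0Pn[x xI] : nth set0 s i != set0 by apply/nz/mem_nth.
apply/negP => /eqP/setP/(_ x); rewrite !mem_bigcup_seq.
have -> : has (fun I : {set _} => x \in I) (take j s).
  apply/hasP; exists (nth set0 s i) => //.
  by rewrite -(nth_take set0 ij) mem_nth // size_takel // ltnW.
case/hasP => I /(nthP set0) [k]; rewrite size_takel ?(ltnW is_) // => ki.
rewrite nth_take // => <- xk; move/pairwiseP: dj => /(_ set0 k i).
rewrite !inE => /(_ (ltn_trans ki is_) is_ ki) /disjointFr /(_ xk).
by rewrite xI.
Qed.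

Lemma sum_take_sJ (R : numDomainType) (lam : 'I_n -> R) s i : pairwise_disjoint s ->
  (\sum_(I <- take i s) sJ I lam = sJ (prefix_union s i) lam)%R.
Proof.
by move=> dj; rewrite /sJ big_bigcup_seq //; apply: subseq_pairwise dj; apply: take_subseq.
Qed.

Lemma ordpart_lamE (R : numDomainType) (lam : 'I_n -> R) s : ordpart_lam lam s =
  ordpart s && all (fun i => (0 < sJ (prefix_union s i) lam)%R) (iota 1 (size s)).
Proof.
rewrite /ordpart_lam; case: (ordpartP s) => //= -[_ dj _].
by apply: eq_all => i; rewrite sum_take_sJ.
Qed.

Lemma ordpart_partition s : ordpart s -> partition [set:: s] setT.
Proof.
case/ordpartP => nz dj cup; apply/and3P; split.
- by rewrite cover_set_seq cup.
- apply/trivIsetP => A B; rewrite !inE => As Bs AB.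
  have iA := index_mem A s; have iB := index_mem B s; rewrite As in iA; rewrite Bs in iB.
  case: (ltngtP (index A s) (index B s)) => h.
  + by move/pairwiseP: dj => /(_ set0 _ _ iA iB h); rewrite !nth_index.
  + by move/pairwiseP: dj => /(_ set0 _ _ iB iA h); rewrite !nth_index // disjoint_sym.
  + by move: AB; rewrite -(nth_index set0 As) h nth_index ?eqxx.
- by rewrite inE; apply/negP => /nz; rewrite eqxx.
Qed.

Lemma partition_ordpart s : uniq s -> partition [set:: s] setT -> ordpart s.
Proof.
move=> us /and3P[/eqP cov /trivIsetP triv nz]; apply/ordpartP; split.
- by move=> I Is; apply: contraNneq nz => <-; rewrite inE.
- apply/(pairwiseP set0) => i j; rewrite !inE => si sj ij.
  by apply: triv; rewrite ?inE ?mem_nth // nth_uniq // neq_ltn ij.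
- by rewrite -cover_set_seq.
Qed.

Lemma enum_ordpart (P : {set {set 'I_n}}) : partition P setT -> ordpart (enum P).
Proof. by move=> Pp; apply: partition_ordpart; rewrite ?enum_set ?enum_uniq. Qed.

Definition mkOP s (h : (size s < n.+1)%N) : OP n :=
  existT (fun k : 'I_n.+1 => k.-tuple {set 'I_n}) (Ordinal h) (in_tuple s).

Lemma P'S_set_seq J s : ordpart' J s -> [set:: s] \in P'S J.
Proof.
move=> s'; have hs : (size s < n.+1)%N by rewrite ltnS ordpart_size //; case/andP: s'.
by apply/imsetP; exists (mkOP hs); rewrite ?inE.
Qed.

Lemma P'SP J P : P \in P'S J -> exists2 s, ordpart' J s & P = [set:: s].
Proof. by case/imsetP => Q; rewrite inE => Q' ->; exists (blocks Q). Qed.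

Lemma cutJ_spec J s r : ordpart s -> (r <= size s)%N -> prefix_union s r = J -> cutJ J s = r.
Proof.
move=> os rs sJr.
have hasJ : has (fun r => prefix_union s r == J) (iota 0 (size s).+1).
  by apply/hasP; exists r; rewrite ?mem_iota ?sJr.
have cs : (cutJ J s <= size s)%N.
  by rewrite -ltnS -[X in (_ < X)%N](size_iota 0 (size s).+1) -has_find.
move: (nth_find 0 hasJ); rewrite -/(cutJ J s) nth_iota ?ltnS // add0n => /eqP sJc.
case: (ltngtP (cutJ J s) r) => // h.
  by have := prefix_union_neq os h rs; rewrite sJc sJr eqxx.
by have := prefix_union_neq os h cs; rewrite sJc sJr eqxx.
Qed.

Lemma ordpart'_cutJ J s : ordpart' J s ->
  [/\ ordpart s, (0 < cutJ J s)%N, (cutJ J s <= size s)%N & prefix_union s (cutJ J s) = J].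
Proof.
case/andP => os /hasP [r]; rewrite mem_iota add1n ltnS => /andP[r1 rs] /eqP sJr.
by rewrite (cutJ_spec os rs sJr).
Qed.

Lemma ordpart_split J s r : ordpart s -> prefix_union s r = J ->
  {in take r s, forall I : {set _}, I \subset J} /\
  {in drop r s, forall I : {set _}, I \subset ~: J}.
Proof.
case/ordpartP => _ dj _ sJr; split => I Is.
  by apply/subsetP => x xI; rewrite -sJr mem_bigcup_seq; apply/hasP; exists I.
move: dj; rewrite -(cat_take_drop r s) pairwise_cat => /and3P[/allrelP dj _ _].
have : [disjoint I & J].
  rewrite -sJr; apply: disjoint_bigcup_seq; apply/allP => I' I's.
  by rewrite disjoint_sym; apply: dj.
by rewrite disjoints_subset.
Qed.

Lemma partition_P'S J (P : {set {set 'I_n}}) :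
  partition P setT -> J \in P -> P \in P'S J.
Proof.
move=> Pp JP; set s := J :: enum (P :\ J).
have sP : [set:: s] = P by rewrite set_cons enum_set setD1K.
have os : ordpart s.
  by apply: partition_ordpart; rewrite ?sP //= mem_enum !inE eqxx enum_uniq.
rewrite -sP P'S_set_seq //; apply/andP; split => //; apply/hasP; exists 1%N.
  by rewrite mem_iota.
by rewrite /= take0 big_seq1.
Qed.

End OrderedPartitions.

Lemma prefix_union_map_imset n k (f : 'I_k -> 'I_n) (t : seq {set 'I_k}) i :
  prefix_union (map (fun A : {set _} => f @: A) t) i = f @: prefix_union t i.
Proof. by rewrite /prefix_union -map_take bigcup_map_imset. Qed.

Lemma prefix_union_map_preimset n k (f : 'I_k -> 'I_n) (t : seq {set 'I_n}) i :
  prefix_union (map (fun A : {set _} => f @^-1: A) t) i = f @^-1: prefix_union t i.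
Proof. by rewrite /prefix_union -map_take bigcup_map_preimset. Qed.

Section Positions.
Variable n : nat.
Implicit Types (s : seq {set 'I_n}) (I : {set 'I_n}).

Definition prefix_card s i := (\sum_(I <- take i s) #|I|)%N.
Definition rank I (x : 'I_n) := #|[set y in I | (y < x)%N]|.

Lemma posPE s x : posP s x = (prefix_card s (blk_of s x) + rank (nth set0 s (blk_of s x)) x)%N.
Proof. by []. Qed.

Lemma prefix_card_mono s i j : (i <= j)%N -> (prefix_card s i <= prefix_card s j)%N.
Proof.
move=> ij; rewrite /prefix_card -(take_takel s ij).
by rewrite -{2}(cat_take_drop i (take j s)) big_cat leq_addr.
Qed.

Lemma prefix_card_le s i : ordpart s -> (prefix_card s i <= n)%N.
Proof.
case/ordpartP => _ dj cup; rewrite -[X in (_ <= X)%N]card_ord -cardsT -cup card_bigcup_seq //.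
by rewrite /prefix_card -{2}(cat_take_drop i s) big_cat leq_addr.
Qed.

Lemma prefix_cardS s i : (i < size s)%N ->
  prefix_card s i.+1 = (prefix_card s i + #|nth set0 s i|)%N.
Proof. by move=> si; rewrite /prefix_card (take_nth set0 si) -cats1 big_cat big_seq1. Qed.

Lemma rank_lt I x : x \in I -> (rank I x < #|I|)%N.
Proof.
move=> xI; rewrite (cardsD1 x I) xI ltnS subset_leq_card //.
by apply/subsetP => y; rewrite !inE => /andP[-> yx]; rewrite andbT neq_ltn yx.
Qed.

Lemma rank_mono I (x y : 'I_n) : x \in I -> (x < y)%N -> (rank I x < rank I y)%N.
Proof.
move=> xI xy; apply: proper_card; rewrite properE; apply/andP; split.
  by apply/subsetP => z; rewrite !inE => /andP[-> /ltn_trans->].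
by apply/subsetPn; exists x; rewrite !inE ?xI ?xy ?ltnn.
Qed.

Lemma posP_lt s x : ordpart s -> (posP s x < n)%N.
Proof.
move=> os; have [bs xb] := ordpart_blk_of x os.
apply: leq_trans (prefix_card_le (blk_of s x).+1 os).
by rewrite posPE prefix_cardS // ltn_add2l rank_lt.
Qed.

Lemma posP_inj s : ordpart s -> injective (posP s).
Proof.
move=> os; have posP_blk_lt x y : (blk_of s x < blk_of s y)%N -> (posP s x < posP s y)%N.
  move=> xy; have [bs xb] := ordpart_blk_of x os.
  apply: (@leq_trans (prefix_card s (blk_of s x).+1)).
    by rewrite posPE prefix_cardS // ltn_add2l rank_lt.
  by rewrite posPE (leq_trans (prefix_card_mono _ xy)) ?leq_addr.
move=> x y e; case: (ltngtP (blk_of s x) (blk_of s y)) => b.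
- by have := posP_blk_lt _ _ b; rewrite e ltnn.
- by have := posP_blk_lt _ _ b; rewrite e ltnn.
have [_ xb] := ordpart_blk_of x os; have [_ yb] := ordpart_blk_of y os.
move: e; rewrite !posPE b => /addnI e; rewrite b in xb.
apply: val_inj; case: (ltngtP (val x) (val y)) => // xy.
  by have := rank_mono xb xy; rewrite e ltnn.
by have := rank_mono yb xy; rewrite e ltnn.
Qed.

Lemma sigmaP_val s x : ordpart s -> val (sigmaP s x) = posP s x.
Proof.
move=> os; rewrite /sigmaP; case: injectiveP => [inj | ninj].
  by rewrite permE /sigmaP_fun val_insubd posP_lt.
exfalso; apply: ninj => x1 x2 /(congr1 val).
by rewrite /sigmaP_fun !val_insubd !posP_lt // => /(posP_inj os).
Qed.

End Positions.

Section IncreasingEmbedding.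
Variables (n k : nat) (f : 'I_k -> 'I_n).
Hypothesis f_incr : forall a b : 'I_k, (a < b)%N -> (f a < f b)%N.
Implicit Types (I : {set 'I_n}) (L : {set 'I_k}).

Lemma incr_ltn a b : (f a < f b)%N = (a < b)%N.
Proof.
apply/idP/idP => [|/f_incr//]; apply: contraTT; rewrite -!leqNgt leq_eqVlt.
by case/orP => [/eqP/val_inj-> // | /f_incr/ltnW].
Qed.

Lemma incr_inj : injective f.
Proof.
move=> a b fab; apply: val_inj; apply/eqP.
by case: ltngtP => // /f_incr; rewrite fab ltnn.
Qed.

Lemma imset_preimset I : I \subset [set f a | a : 'I_k] -> f @: (f @^-1: I) = I.
Proof.
move=> If; apply/setP => x; apply/imsetP/idP => [[a] | xI]; first by rewrite inE => ? ->.
by case/imsetP: (subsetP If x xI) => a _ xa; exists a; rewrite // inE -xa.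
Qed.

Lemma preimset_imset L : f @^-1: (f @: L) = L.
Proof. by apply/setP => a; rewrite inE mem_imset //; apply: incr_inj. Qed.

Lemma card_preimset_incr I : I \subset [set f a | a : 'I_k] -> #|f @^-1: I| = #|I|.
Proof. by move=> If; rewrite -{2}(imset_preimset If) card_imset //; apply: incr_inj. Qed.

Lemma sJ_imset (R : numDomainType) (lam : 'I_n -> R) L :
  sJ (f @: L) lam = sJ L (lam \o f).
Proof. by rewrite /sJ big_imset // => a b _ _; apply: incr_inj. Qed.

Lemma sJ_preimset (R : numDomainType) (lam : 'I_n -> R) I :
  I \subset [set f a | a : 'I_k] -> sJ (f @^-1: I) (lam \o f) = sJ I lam.
Proof. by move=> If; rewrite -sJ_imset imset_preimset. Qed.

Lemma rank_preimset I a : I \subset [set f b | b : 'I_k] -> rank I (f a) = rank (f @^-1: I) a.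
Proof.
move=> If; rewrite /rank -[RHS](card_imset _ incr_inj); apply: eq_card => x.
rewrite !inE; apply/andP/imsetP => [[xI xa] | [b]].
  case/imsetP: (subsetP If x xI) => b _ xb; exists b => //.
  by rewrite !inE -xb xI -(incr_ltn b a) -xb.
by rewrite !inE => /andP[bI ba] ->; rewrite bI incr_ltn.
Qed.

Lemma preimset_eq0 I : I \subset [set f a | a : 'I_k] -> (f @^-1: I == set0) = (I == set0).
Proof. by move=> If; rewrite -{2}(imset_preimset If) imset_eq0. Qed.

Lemma disjoint_preimset I1 I2 : [disjoint I1 & I2] -> [disjoint f @^-1: I1 & f @^-1: I2].
Proof. by rewrite -!setI_eq0 -preimsetI => /eqP->; rewrite preimset0. Qed.

Lemma disjoint_imset L1 L2 : [disjoint L1 & L2] -> [disjoint f @: L1 & f @: L2].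
Proof.
rewrite -!setI_eq0 -imsetI ?imset_eq0 // => a b _ _; exact: incr_inj.
Qed.

End IncreasingEmbedding.

Lemma sJU (R : numDomainType) n (lam : 'I_n -> R) (A B : {set 'I_n}) :
  [disjoint A & B] -> sJ (A :|: B) lam = (sJ A lam + sJ B lam)%R.
Proof. by move=> AB; rewrite /sJ -bigU //; apply: eq_bigl => i; rewrite !inE. Qed.

Section Shift.
Local Open Scope ring_scope.
Variables (R : realFieldType) (n : nat) (lam : 'I_n -> R) (delta : R) (J : {set 'I_n}).
Hypothesis delta_min : is_delta lam delta.
Hypothesis avgJ : avg J lam = delta.
Hypothesis J_min : forall J' : {set 'I_n}, avg J' lam = delta -> (#|J| <= #|J'|)%N.
Let lam' := fun i : 'I_n => if i \in J then lam i - delta else lam i.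

Lemma sJ_avg (K : {set 'I_n}) (f : 'I_n -> R) : (0 < #|K|)%N -> sJ K f = #|K|%:R * avg K f.
Proof. by move=> K0; rewrite /avg mulrCA mulfV ?mulr1 // pnatr_eq0 -lt0n. Qed.

Lemma sJ_gt0_card_gt0 (K : {set 'I_n}) : 0 < sJ K lam -> (0 < #|K|)%N.
Proof. by rewrite card_gt0; apply: contraTneq => ->; rewrite /sJ big_set0 ltxx. Qed.

Lemma delta_gt0 : 0 < delta.
Proof.
by case: delta_min => -[K [K0 <-]] _; rewrite divr_gt0 // ltr0n sJ_gt0_card_gt0.
Qed.

Lemma card_J_gt0 : (0 < #|J|)%N.
Proof.
rewrite lt0n; apply: contraTneq delta_gt0 => J0.
by rewrite -avgJ /avg J0 invr0 mulr0 ltxx.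
Qed.

Lemma sJ_J : sJ J lam = #|J|%:R * delta.
Proof. by rewrite sJ_avg ?avgJ ?card_J_gt0. Qed.

Lemma sJ_J_gt0 : 0 < sJ J lam.
Proof. by rewrite sJ_J mulr_gt0 ?delta_gt0 // ltr0n card_J_gt0. Qed.

Lemma sJ_shift (K : {set 'I_n}) : sJ K lam' = sJ K lam - #|K :&: J|%:R * delta.
Proof.
have -> : sJ K lam' = \sum_(i in K) (lam i - (i \in J)%:R * delta).
  by apply: eq_bigr => i _; rewrite /lam'; case: (i \in J); rewrite ?mul1r ?mul0r ?subr0.
rewrite sumrB -mulr_suml -natr_sum -sum1_card; congr (_ - _%:R * _).
rewrite [RHS](eq_bigl (fun i => (i \in K) && (i \in J))) => [|i]; last by rewrite inE.
by rewrite big_mkcondr; apply: eq_bigr => i _; case: (i \in J).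
Qed.

Lemma sJ_shift_J : sJ J lam' = 0.
Proof. by rewrite sJ_shift setIid sJ_J subrr. Qed.

Lemma sJ_shift_gt0 (K : {set 'I_n}) : K != J -> (0 < sJ K lam') = (0 < sJ K lam).
Proof.
move=> KJ; rewrite sJ_shift; apply/idP/idP => [K'0|K0].
  by apply: lt_le_trans K'0 _; rewrite lerBlDr lerDl mulr_ge0 ?ler0n ?ltW ?delta_gt0.
have cK := sJ_gt0_card_gt0 K0.
have lbK : #|K|%:R * delta <= sJ K lam.
  by case: delta_min => _ /(_ K K0) dK; rewrite sJ_avg // ler_pM2l ?ltr0n.
rewrite subr_gt0; have [KsubJ | KnsubJ] := boolP (K \subset J).
  rewrite (setIidPl KsubJ) lt_neqAle lbK andbT; apply: contra KJ => /eqP eK.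
  have avgK : avg K lam = delta.
    have K0' : #|K|%:R != 0 :> R by rewrite pnatr_eq0 -lt0n.
    by apply: (mulfI K0'); rewrite -sJ_avg.
  by rewrite eqEcard KsubJ J_min.
apply: lt_le_trans lbK; rewrite ltr_pM2r ?delta_gt0 // ltr_nat.
rewrite ltn_neqAle subset_leq_card ?subsetIl // andbT.
apply: contraNneq KnsubJ => cKJ.
by apply/setIidPl/eqP; rewrite eqEcard subsetIl cKJ leqnn.
Qed.

Lemma sJ_compl_gt0 (V : {set 'I_n}) : V \subset ~: J -> V != set0 ->
  0 < sJ (J :|: V) lam -> 0 < sJ V lam.
Proof.
move=> VJ V0; have JV : [disjoint J & V] by rewrite disjoint_sym disjoints_subset.
have JVneJ : J :|: V != J.
  apply: contra V0 => /eqP JVJ; rewrite -subset0; apply/subsetP => x xV.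
  by have := subsetP VJ x xV; rewrite inE -JVJ inE xV orbT.
rewrite -(sJ_shift_gt0 JVneJ) sJU // sJ_shift_J add0r sJ_shift.
by rewrite setIC disjoint_setI0 // cards0 mul0r subr0.
Qed.

Lemma ordpart_lam_shift s : ordpart_lam lam' s = ordpart_lam lam s && ~~ ordpart' J s.
Proof.
rewrite !ordpart_lamE /ordpart'; case: (ordpart s) => //=.
rewrite -all_predC -all_predI; apply: eq_all => i /=; rewrite -/(prefix_union s i).
have [-> | ne] := eqVneq (prefix_union s i) J; first by rewrite sJ_shift_J ltxx andbF.
by rewrite sJ_shift_gt0 ?andbT.
Qed.

Lemma part_lam_shift P : part_lam lam' P = part_lam lam P && (P \notin P'S J).
Proof.
rewrite /part_lam; case Pp: (partition P setT) => //=.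
have [JP | JnP] := boolP (J \in P).
  rewrite partition_P'S // andbF; apply/forallP => /(_ J).
  by rewrite JP sJ_shift_J ltxx.
have sJ_shift_P I : I \in P -> (0 < sJ I lam') = (0 < sJ I lam).
  by move=> IP; apply: sJ_shift_gt0; apply: contraNneq JnP => <-.
apply/idP/idP => [/forallP pos' | /andP[/forallP pos _]]; last first.
  by apply/forallP => I; apply/implyP => IP; rewrite sJ_shift_P //; apply: (implyP (pos I)).
apply/andP; split.
  by apply/forallP => I; apply/implyP => IP; rewrite -sJ_shift_P //; apply: (implyP (pos' I)).
apply/negP => /P'SP [s s' eP]; have [os r_gt0 rs sJr] := ordpart'_cutJ s'.
case/ordpartP: (os) => _ dj _; move: (sum_take_sJ lam' (cutJ J s) dj).
rewrite sJr sJ_shift_J => /eqP; apply/negP; rewrite lt0r_neq0 // sumr_seq_gt0 //.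
  by rewrite -size_eq0 size_takel // -lt0n.
by move=> I /mem_take Is; apply: (implyP (pos' I)); rewrite eP inE.
Qed.

Lemma PordS_shift : PordS lam' = PordS lam :\: Pord'S J.
Proof. by apply/setP => Q; rewrite !inE ordpart_lam_shift andbC. Qed.

Lemma PS_shift : PS lam' = PS lam :\: P'S J.
Proof. by apply/setP => P; rewrite !inE part_lam_shift andbC. Qed.

Hypothesis sum_gt0 : 0 < \sum_(i < n) lam i.

Lemma exists_ordpart'_lam : exists w : seq {set 'I_n},
  [/\ ordpart' J w, ordpart_lam lam w & {in w, forall I, 0 < sJ I lam}].
Proof.
have J0 : J != set0 by rewrite -card_gt0 card_J_gt0.
have sJT : sJ setT lam = \sum_(i < n) lam i by apply: eq_bigl => i; rewrite inE.
have J_head w : ordpart (J :: w) -> ordpart' J (J :: w).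
  move=> ow; apply/andP; split => //.
  by apply/hasP; exists 1%N; rewrite ?mem_iota //= take0 big_seq1.
have [/eqP JC0 | JC0] := boolP (~: J == set0).
  have JT : J = setT by rewrite -(setCK J) JC0 setC0.
  have oJ : ordpart [:: J] by rewrite /ordpart /= J0 big_seq1 JT eqxx.
  exists [:: J]; rewrite J_head // ordpart_lamE oJ /= andbT /prefix_union /= big_seq1.
  split=> //; first exact: sJ_J_gt0.
  by move=> I; rewrite inE => /eqP ->; exact: sJ_J_gt0.
have dJ : [disjoint J & ~: J] by rewrite -setI_eq0 setICr.
have oJJ : ordpart [:: J; ~: J].
  by rewrite /ordpart /= J0 JC0 dJ !big_cons big_nil setU0 setUCr eqxx.
exists [:: J; ~: J]; rewrite J_head // ordpart_lamE oJJ /= /prefix_union /=.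
rewrite !big_cons big_nil !setU0 setUCr sJT sum_gt0 sJ_J_gt0; split=> // I.
rewrite !inE => /orP[] /eqP -> //; first exact: sJ_J_gt0.
by apply: sJ_compl_gt0 => //; rewrite setUCr sJT.
Qed.

Lemma Pord'S_PordS_neq0 : Pord'S J :&: PordS lam != set0.
Proof.
have [w [w' w_lam _]] := exists_ordpart'_lam.
have w_size : (size w < n.+1)%N by rewrite ltnS ordpart_size //; case/andP: w'.
by apply/set0Pn; exists (mkOP w_size); rewrite !inE; apply/andP.
Qed.

Lemma P'S_PS_neq0 : P'S J :&: PS lam != set0.
Proof.
have [w [w' /andP[ow _] w_pos]] := exists_ordpart'_lam.
apply/set0Pn; exists [set:: w]; rewrite inE P'S_set_seq // inE /part_lam ordpart_partition //=.
by apply/forallP => I; apply/implyP; rewrite inE; apply: w_pos.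
Qed.

End Shift.

Lemma sign_perm_block (N m m' : nat) (E : N = (m + m')%N) (t : {perm 'I_N})
    (p1 : {perm 'I_m}) (p2 : {perm 'I_m'}) :
  (forall (a : 'I_m) (x : 'I_N), val x = a -> val (t x) = p1 a) ->
  (forall (c : 'I_m') (x : 'I_N), val x = (m + c)%N -> val (t x) = (m + p2 c)%N) ->
  ((-1) ^+ odd_perm t = (-1) ^+ odd_perm p1 * (-1) ^+ odd_perm p2 :> int)%R.
Proof.
(* both sides are determinants of permutation matrices, the left one block diagonal *)
subst N => tl tr; rewrite -!det_perm -(det_ublock _ 0); congr (\det _)%R.
have tlE a : t (lshift m' a) = lshift m' (p1 a) by apply: val_inj; rewrite /= (tl a).
have trE c : t (rshift m c) = rshift m (p2 c) by apply: val_inj; rewrite /= (tr c).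
apply/matrixP => i j; rewrite -(splitK i) -(splitK j).
case: (split i) => i'; case: (split j) => j' /=.
- by rewrite block_mxEul !perm_mxEsub !mxE tlE eq_lshift.
- by rewrite block_mxEur !perm_mxEsub !mxE tlE eq_lrshift.
- by rewrite block_mxEdl !perm_mxEsub !mxE trE eq_rlshift.
- by rewrite block_mxEdr !perm_mxEsub !mxE trE eq_rshift.
Qed.

Section Decomposition.
Variables (n m m' : nat) (J : {set 'I_n}) (iJ : 'I_m -> 'I_n) (jK : 'I_m' -> 'I_n).
Hypothesis iJ_incr : forall r s : 'I_m, (r < s)%N -> (iJ r < iJ s)%N.
Hypothesis jK_incr : forall r s : 'I_m', (r < s)%N -> (jK r < jK s)%N.
Hypothesis J_im : J = [set iJ r | r : 'I_m].
Hypothesis JC_im : ~: J = [set jK r | r : 'I_m'].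
Hypothesis J0 : J != set0.
Implicit Types (s t : seq {set 'I_n}).

Lemma iJ_in r : iJ r \in J.
Proof. by rewrite J_im imset_f. Qed.

Lemma jK_notin r : jK r \notin J.
Proof.
have : jK r \in ~: J by rewrite JC_im imset_f.
by rewrite inE.
Qed.

Lemma card_split : n = (m + m')%N.
Proof.
rewrite -[n]card_ord -(cardsC J) JC_im J_im !card_imset ?card_ord //.
  exact: incr_inj jK_incr.
exact: incr_inj iJ_incr.
Qed.

Definition glue (s1 : seq {set 'I_m}) (s2 : seq {set 'I_m'}) : seq {set 'I_n} :=
  map (fun L : {set 'I_m} => iJ @: L) s1 ++ map (fun L : {set 'I_m'} => jK @: L) s2.

Lemma glue_phi_ord s : ordpart' J s -> glue (phi_ord J iJ jK s).1 (phi_ord J iJ jK s).2 = s.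
Proof.
case/ordpart'_cutJ => os _ _ sJr; have [sub_J sub_JC] := ordpart_split os sJr.
rewrite /glue /phi_ord /= -!map_comp -[RHS](cat_take_drop (cutJ J s) s).
congr (_ ++ _); apply: map_id_in => I Is /=; apply: imset_preimset.
- by rewrite -J_im sub_J.
- by rewrite -JC_im sub_JC.
Qed.

Lemma glue_ordpart (s1 : seq {set 'I_m}) (s2 : seq {set 'I_m'}) :
  ordpart s1 -> ordpart s2 -> ordpart (glue s1 s2).
Proof.
case/ordpartP => nz1 dj1 cup1 /ordpartP[nz2 dj2 cup2]; apply/ordpartP; split.
- move=> I; rewrite mem_cat => /orP[] /mapP[L Ls ->]; rewrite imset_eq0.
    exact: nz1.
  exact: nz2.
- rewrite pairwise_cat !pairwise_map; apply/and3P; split.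
  + rewrite allrel_mapl allrel_mapr; apply/allrelP => L1 L2 _ _.
    rewrite -setI_eq0; apply/set0Pn => -[x]; rewrite inE.
    case/andP => /imsetP[a _ ->] /imsetP[b _ ab].
    by have := iJ_in a; rewrite ab (negbTE (jK_notin b)).
  + by apply: sub_pairwise dj1 => L1 L2; apply: disjoint_imset.
  + by apply: sub_pairwise dj2 => L1 L2; apply: disjoint_imset.
- rewrite big_cat /= !bigcup_map_imset cup1 cup2.
  by rewrite !imset_setT -J_im -JC_im setUCr.
Qed.

Lemma prefix_union_glue (s1 : seq {set 'I_m}) (s2 : seq {set 'I_m'}) :
  ordpart s1 -> prefix_union (glue s1 s2) (size s1) = J.
Proof.
case/ordpartP => _ _ cup1; rewrite /prefix_union take_size_cat ?size_map //.
by rewrite bigcup_map_imset cup1 imset_setT J_im.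
Qed.

Lemma glue_ordpart' (s1 : seq {set 'I_m}) (s2 : seq {set 'I_m'}) :
  ordpart s1 -> ordpart s2 -> ordpart' J (glue s1 s2).
Proof.
move=> os1 os2; apply/andP; split; first exact: glue_ordpart.
apply/hasP; exists (size s1); last by rewrite -/(prefix_union _ _) prefix_union_glue.
rewrite mem_iota add1n ltnS size_cat size_map leq_addr andbT lt0n size_eq0.
apply: contra_neq J0 => s10; rewrite -(prefix_union_glue s2 os1) s10.
by rewrite /prefix_union take0 big_nil.
Qed.

Lemma phi_ord_glue (s1 : seq {set 'I_m}) (s2 : seq {set 'I_m'}) :
  ordpart s1 -> ordpart s2 -> phi_ord J iJ jK (glue s1 s2) = (s1, s2).
Proof.
move=> os1 os2; rewrite /phi_ord; have -> : cutJ J (glue s1 s2) = size s1.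
  apply: cutJ_spec; rewrite ?glue_ordpart ?prefix_union_glue //.
  by rewrite size_cat size_map leq_addr.
rewrite /glue take_size_cat ?drop_size_cat ?size_map // -!map_comp.
by congr (_, _); apply: map_id_in => L _ /=; apply: preimset_imset.
Qed.

Lemma phi_ord_ordpart s : ordpart' J s ->
  ordpart (phi_ord J iJ jK s).1 /\ ordpart (phi_ord J iJ jK s).2.
Proof.
move=> s'; have [os _ _ sJr] := ordpart'_cutJ s'; have [sub_J sub_JC] := ordpart_split os sJr.
have [nz dj cup] := ordpartP _ os.
rewrite /phi_ord /=; split; apply/ordpartP; split.
- move=> I' /mapP[I Is ->]; rewrite preimset_eq0 ?nz ?(mem_take Is) //.
  by rewrite -J_im sub_J.
- by rewrite pairwise_map; apply: sub_pairwise (subseq_pairwise (take_subseq _ _) dj) => I1 I2;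
    apply: disjoint_preimset.
- rewrite bigcup_map_preimset -/(prefix_union s _) sJr.
  by apply/setP => a; rewrite !inE iJ_in.
- move=> I' /mapP[I Is ->]; rewrite preimset_eq0 ?nz ?(mem_drop Is) //.
  by rewrite -JC_im sub_JC.
- by rewrite pairwise_map; apply: sub_pairwise (subseq_pairwise (drop_subseq _ _) dj) => I1 I2;
    apply: disjoint_preimset.
- rewrite bigcup_map_preimset; apply/setP => c; rewrite !inE.
  have : jK c \in \bigcup_(I <- s) I by rewrite cup inE.
  rewrite -{1}(cat_take_drop (cutJ J s) s) big_cat -/(prefix_union s _) sJr inE.
  by rewrite (negbTE (jK_notin c)).
Qed.

Lemma phi_set_seq s : ordpart' J s ->
  phi J iJ jK [set:: s] = ([set:: (phi_ord J iJ jK s).1], [set:: (phi_ord J iJ jK s).2]).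
Proof.
move=> s'; have [os _ _ sJr] := ordpart'_cutJ s'; have [sub_J sub_JC] := ordpart_split os sJr.
have [nz _ _] := ordpartP _ os.
have not_both I : I \in s -> I \subset J -> I \subset ~: J -> False.
  by move=> Is IJ IJC; move/negP: (nz I Is); apply; rewrite -subset0 -(setICr J) subsetI IJ.
have inJ : [set I in [set:: s] | I \subset J] = [set:: take (cutJ J s) s].
  apply/setP => I; rewrite !inE -{1}(cat_take_drop (cutJ J s) s) mem_cat.
  apply/andP/idP => [[/orP[// | Is] IJ] | Is]; last by rewrite Is sub_J.
  by case: (not_both I (mem_drop Is) IJ (sub_JC I Is)).
have inJC : [set I in [set:: s] | I \subset ~: J] = [set:: drop (cutJ J s) s].
  apply/setP => I; rewrite !inE -{1}(cat_take_drop (cutJ J s) s) mem_cat.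
  apply/andP/idP => [[/orP[Is | //] IJC] | Is]; last by rewrite Is sub_JC ?orbT.
  by case: (not_both I (mem_take Is) (sub_J I Is) IJC).
by rewrite /phi inJ inJC !imset_set_seq.
Qed.

Definition glue_sets (P : {set {set 'I_m}} * {set {set 'I_m'}}) : {set {set 'I_n}} :=
  (fun L : {set 'I_m} => iJ @: L) @: P.1 :|: (fun L : {set 'I_m'} => jK @: L) @: P.2.

Lemma glue_sets_phi P : P \in P'S J -> glue_sets (phi J iJ jK P) = P.
Proof.
case/P'SP => s s' ->; rewrite phi_set_seq // /glue_sets !imset_set_seq -set_seq_cat.
by have := glue_phi_ord s'; rewrite /glue => ->.
Qed.

Lemma phi_inj : {in P'S J &, injective (phi J iJ jK)}.
Proof. by move=> P Q P' Q' PQ; rewrite -(glue_sets_phi P') -(glue_sets_phi Q') PQ. Qed.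

Lemma phi_ord_inj : {in ordpart' J &, injective (phi_ord J iJ jK)}.
Proof. by move=> s t s' t' st; rewrite -(glue_phi_ord s') -(glue_phi_ord t') st. Qed.

Lemma posP_iJ s a : ordpart' J s -> posP s (iJ a) = posP (phi_ord J iJ jK s).1 a.
Proof.
move=> s'; have [os _ rs sJr] := ordpart'_cutJ s'; have [sub_J _] := ordpart_split os sJr.
rewrite /phi_ord /= !posPE; move: rs sJr sub_J; set r := cutJ J s => rs sJr sub_J.
have size_r : size (take r s) = r by rewrite size_takel.
have in_take : has (fun I : {set 'I_n} => iJ a \in I) (take r s).
  by rewrite -mem_bigcup_seq -/(prefix_union s r) sJr iJ_in.
have blk_lt : (blk_of s (iJ a) < r)%N.
  by rewrite -size_r /blk_of -{1}(cat_take_drop r s) find_cat in_take -has_find.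
have -> : blk_of (map (fun I : {set _} => iJ @^-1: I) (take r s)) a = blk_of s (iJ a).
  rewrite /blk_of find_map -[in RHS](cat_take_drop r s) find_cat in_take.
  by apply: eq_find => I; rewrite /preim /= inE.
rewrite -(nth_take set0 blk_lt) (nth_map set0) ?size_r // rank_preimset //; last first.
  by rewrite -J_im sub_J // mem_nth ?size_r.
congr addn; rewrite /prefix_card -map_take big_map -(take_takel s (ltnW blk_lt)).
by apply/esym/eq_big_seq => I /mem_take Is; rewrite card_preimset_incr // -J_im sub_J.
Qed.

Lemma posP_jK s c : ordpart' J s -> posP s (jK c) = (m + posP (phi_ord J iJ jK s).2 c)%N.
Proof.
move=> s'; have [os _ rs sJr] := ordpart'_cutJ s'; have [sub_J sub_JC] := ordpart_split os sJr.
have [_ os2] := phi_ord_ordpart s'; rewrite /phi_ord /= !posPE in os2 *.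
move: rs sJr sub_J sub_JC os2; set r := cutJ J s => rs sJr sub_J sub_JC os2.
have size_r : size (take r s) = r by rewrite size_takel.
have notin_take : ~~ has (fun I : {set 'I_n} => jK c \in I) (take r s).
  by apply/hasP => -[I /sub_J/subsetP IJ /IJ]; rewrite (negbTE (jK_notin c)).
have [blk_lt _] := ordpart_blk_of c os2; rewrite size_map in blk_lt.
have -> : blk_of s (jK c) = (r + blk_of (map (fun I : {set _} => jK @^-1: I) (drop r s)) c)%N.
  rewrite /blk_of find_map -[in LHS](cat_take_drop r s) find_cat (negbTE notin_take) size_r.
  by congr addn; apply: eq_find => I; rewrite /preim /= inE.
rewrite addnA -nth_drop (nth_map set0) // rank_preimset //; last first.
  by rewrite -JC_im sub_JC // mem_nth.
congr addn; rewrite /prefix_card takeD big_cat; congr addn.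
  have [_ dj _] := ordpartP _ os.
  rewrite -card_bigcup_seq ?(subseq_pairwise (take_subseq _ _) dj) // -/(prefix_union s r) sJr.
  by rewrite J_im card_imset ?card_ord //; apply: incr_inj iJ_incr.
rewrite -map_take big_map; apply: eq_big_seq => I /mem_take Is.
by rewrite card_preimset_incr // -JC_im sub_JC.
Qed.

Lemma eps_phi_ord s (sigma : {perm 'I_n}) : ordpart' J s ->
  (forall r : 'I_m, (sigma (iJ r) : nat) = r) ->
  (forall r : 'I_m', (sigma (jK r) : nat) = (m + r)%N) ->
  (eps s = (-1) ^+ odd_perm sigma * eps (phi_ord J iJ jK s).1 * eps (phi_ord J iJ jK s).2)%R.
Proof.
move=> s' sigma_iJ sigma_jK; have [os1 os2] := phi_ord_ordpart s'.
have [os _ _ _] := ordpart'_cutJ s'.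
(* sigmaP s = sigma * t, where t acts as sigmaP of the two halves on the two blocks *)
rewrite /eps -(mulKVg sigma (sigmaP s)) odd_permM signr_addb -mulrA; congr (_ * _)%R.
apply: (sign_perm_block card_split) => [a x xa | c x xc].
  have -> : x = sigma (iJ a) by apply: val_inj; rewrite /= sigma_iJ.
  by rewrite permM permK !sigmaP_val // posP_iJ.
have -> : x = sigma (jK c) by apply: val_inj; rewrite /= sigma_jK.
by rewrite permM permK !sigmaP_val // posP_jK.
Qed.

Lemma eps'_phi_ord s : ordpart' J s ->
  (eps' s = eps' (phi_ord J iJ jK s).1 * eps' (phi_ord J iJ jK s).2)%R.
Proof.
move=> s'; have [os _ _ sJr] := ordpart'_cutJ s'; have [sub_J sub_JC] := ordpart_split os sJr.
rewrite /eps' -exprD /phi_ord /= !big_map -{1}(cat_take_drop (cutJ J s) s) big_cat.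
congr (_ ^+ (_ + _))%R; apply: eq_big_seq => I Is.
  by rewrite card_preimset_incr // -J_im sub_J.
by rewrite card_preimset_incr // -JC_im sub_JC.
Qed.

Lemma glue_lam (R : numDomainType) (lam : 'I_n -> R)
    (s1 : seq {set 'I_m}) (s2 : seq {set 'I_m'}) :
  (0 < sJ J lam)%R -> ordpart_lam (lam \o iJ) s1 -> ordpart_lam (lam \o jK) s2 ->
  ordpart_lam lam (glue s1 s2).
Proof.
move=> sJ_gt0; rewrite !ordpart_lamE => /andP[os1 /allP pos1] /andP[os2 /allP pos2].
rewrite glue_ordpart //=; apply/allP => i; rewrite mem_iota add1n ltnS size_cat !size_map.
case/andP => i_gt0 i_le; have [i_s1 | s1_i] := leqP i (size s1).
  rewrite prefix_union_catl ?size_map // prefix_union_map_imset sJ_imset //.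
  by rewrite pos1 // mem_iota add1n ltnS i_gt0.
rewrite -(subnKC (ltnW s1_i)) -(size_map (fun L : {set 'I_m} => iJ @: L)) prefix_union_cat.
have [_ _ cup1] := ordpartP _ os1.
rewrite bigcup_map_imset cup1 imset_setT -J_im prefix_union_map_imset sJU.
  apply: addr_gt0 => //.
  by rewrite sJ_imset // pos2 // mem_iota add1n ltnS size_map subn_gt0 s1_i leq_subLR.
by rewrite disjoint_sym disjoints_subset JC_im; apply/subsetP => x /imsetP[c _ ->]; apply: imset_f.
Qed.

Lemma phi_PS (R : numDomainType) (lam : 'I_n -> R) P : P \in P'S J :&: PS lam ->
  ((phi J iJ jK P).1 \in PS (lam \o iJ)) && ((phi J iJ jK P).2 \in PS (lam \o jK)).
Proof.
case/setIP => /P'SP[s s' ->]; rewrite inE => /andP[_ /forallP pos].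
have [os1 os2] := phi_ord_ordpart s'; have [os _ _ sJr] := ordpart'_cutJ s'.
have [sub_J sub_JC] := ordpart_split os sJr.
rewrite phi_set_seq // !inE /part_lam !ordpart_partition //=.
apply/andP; split; apply/forallP => I'; apply/implyP; rewrite inE /phi_ord => /mapP[I Is ->].
  by rewrite sJ_preimset -?J_im ?sub_J //; apply: (implyP (pos I)); rewrite inE (mem_take Is).
by rewrite sJ_preimset -?JC_im ?sub_JC //; apply: (implyP (pos I)); rewrite inE (mem_drop Is).
Qed.

Lemma phi_surj (R : numDomainType) (lam : 'I_n -> R)
    (P1 : {set {set 'I_m}}) (P2 : {set {set 'I_m'}}) :
  P1 \in PS (lam \o iJ) -> P2 \in PS (lam \o jK) ->
  exists2 P, P \in P'S J :&: PS lam & phi J iJ jK P = (P1, P2).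
Proof.
rewrite !inE => /andP[part1 /forallP pos1] /andP[part2 /forallP pos2].
have os1 := enum_ordpart part1; have os2 := enum_ordpart part2.
exists [set:: glue (enum P1) (enum P2)]; last first.
  by rewrite phi_set_seq ?glue_ordpart' // phi_ord_glue // !enum_set.
rewrite inE P'S_set_seq ?glue_ordpart' // inE /part_lam ordpart_partition ?glue_ordpart //=.
apply/forallP => I; apply/implyP; rewrite inE mem_cat => /orP[] /mapP[L L_P ->];
  rewrite mem_enum in L_P; rewrite sJ_imset //.
  exact: (implyP (pos1 L)).
exact: (implyP (pos2 L)).
Qed.

Lemma phi_ord_lam (R : numDomainType) (lam : 'I_n -> R) s :
  (forall V : {set 'I_n}, V \subset ~: J -> V != set0 ->
    (0 < sJ (J :|: V) lam)%R -> (0 < sJ V lam)%R) ->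
  ordpart' J s -> ordpart_lam lam s ->
  ordpart_lam (lam \o iJ) (phi_ord J iJ jK s).1 && ordpart_lam (lam \o jK) (phi_ord J iJ jK s).2.
Proof.
move=> compl_gt0 s' /andP[_ /allP pos]; have [os1 os2] := phi_ord_ordpart s'.
have [os r_gt0 rs sJr] := ordpart'_cutJ s'; have [sub_J sub_JC] := ordpart_split os sJr.
have [nz dj _] := ordpartP _ os; rewrite !ordpart_lamE os1 os2 /phi_ord /=.
move: os1 os2 r_gt0 rs sJr sub_J sub_JC; set r := cutJ J s => os1 os2 r_gt0 rs sJr sub_J sub_JC.
have pos' i : (0 < i <= size s)%N -> (0 < sJ (prefix_union s i) lam)%R.
  by move=> i_s; rewrite -sum_take_sJ // pos // mem_iota add1n ltnS.
apply/andP; split; apply/allP => i; rewrite mem_iota size_map add1n ltnS => /andP[i_gt0 i_le].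
  rewrite size_takel // in i_le.
  rewrite /prefix_union -map_take take_takel // bigcup_map_preimset -/(prefix_union s i).
  rewrite sJ_preimset ?pos' ?i_gt0 ?(leq_trans i_le rs) //.
  by rewrite -J_im -sJr prefix_union_mono.
have VJC : prefix_union (drop r s) i \subset ~: J.
  by apply/subsetP => x; rewrite mem_bigcup_seq => /hasP[I /mem_take/sub_JC/subsetP]; apply.
rewrite /prefix_union -map_take bigcup_map_preimset sJ_preimset -?JC_im //.
apply: compl_gt0 VJC _ _.
  apply/set0Pn; have /set0Pn[x xI] := nz _ (mem_drop (mem_nth set0 (leq_trans i_gt0 i_le))).
  exists x; rewrite mem_bigcup_seq; apply/hasP; exists (nth set0 (drop r s) 0) => //.
  by rewrite -(nth_take set0 i_gt0) mem_nth // size_takel.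
have -> : J :|: prefix_union (drop r s) i = prefix_union s (r + i).
  by rewrite /prefix_union takeD big_cat /= -/(prefix_union s r) sJr.
by apply: pos'; rewrite addn_gt0 r_gt0 -(subnKC rs) leq_add2l -size_drop.
Qed.

End Decomposition.

Local Open Scope ring_scope.

Theorem mainTheorem14 (R : realFieldType) (n : nat) (lam : 'I_n -> R)
    (delta : R) (J : {set 'I_n}) (m : nat)
    (iJ : 'I_m -> 'I_n) (jK : 'I_(n - m) -> 'I_n) (sigma : {perm 'I_n}) :
  0 < \sum_(i < n) lam i ->
  is_delta lam delta ->
  avg J lam = delta ->
  (forall J' : {set 'I_n}, avg J' lam = delta -> (#|J| <= #|J'|)%N) ->
  #|J| = m ->
  (forall r s : 'I_m, (r < s)%N -> (iJ r < iJ s)%N) ->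
  J = [set iJ r | r : 'I_m] ->
  (forall r s : 'I_(n - m), (r < s)%N -> (jK r < jK s)%N) ->
  ~: J = [set jK r | r : 'I_(n - m)] ->
  (forall r : 'I_m, (sigma (iJ r) : nat) = r) ->
  (forall r : 'I_(n - m), (sigma (jK r) : nat) = (m + r)%N) ->
  let lam' := fun i : 'I_n => if i \in J then lam i - delta else lam i in
  let mu := fun r : 'I_m => lam (iJ r) in
  let nu := fun r : 'I_(n - m) => lam (jK r) in
  let eps0 : int := (-1) ^+ odd_perm sigma in
  (* (i) *)
  (forall K : {set 'I_n}, K != J -> (0 < sJ K lam') = (0 < sJ K lam)) /\
  (* (ii) *)
  (PordS lam = PordS lam' :|: (Pord'S J :&: PordS lam) /\
   [disjoint PordS lam' & Pord'S J :&: PordS lam] /\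
   PS lam = PS lam' :|: (P'S J :&: PS lam) /\
   [disjoint PS lam' & P'S J :&: PS lam] /\
   (#|PordS lam'| < #|PordS lam|)%N /\
   (#|PS lam'| < #|PS lam|)%N) /\
  (* (iii) *)
  (forall s : seq {set 'I_n}, ordpart' J s ->
     eps s = eps0 * eps (phi_ord J iJ jK s).1 * eps (phi_ord J iJ jK s).2 /\
     eps' s = eps' (phi_ord J iJ jK s).1 * eps' (phi_ord J iJ jK s).2) /\
  (* (iv), ordered *)
  ((forall s : seq {set 'I_n}, ordpart' J s -> ordpart_lam lam s ->
      ordpart_lam mu (phi_ord J iJ jK s).1 && ordpart_lam nu (phi_ord J iJ jK s).2) /\
   (forall s t : seq {set 'I_n}, ordpart' J s -> ordpart_lam lam s ->
      ordpart' J t -> ordpart_lam lam t ->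
      phi_ord J iJ jK s = phi_ord J iJ jK t -> s = t) /\
   (forall (s1 : seq {set 'I_m}) (s2 : seq {set 'I_(n - m)}),
      ordpart_lam mu s1 -> ordpart_lam nu s2 ->
      exists s : seq {set 'I_n}, [/\ ordpart' J s, ordpart_lam lam s &
                                     phi_ord J iJ jK s = (s1, s2)])) /\
  (* (iv), unordered *)
  ((forall P, P \in P'S J :&: PS lam ->
      ((phi J iJ jK P).1 \in PS mu) && ((phi J iJ jK P).2 \in PS nu)) /\
   {in P'S J :&: PS lam &, injective (phi J iJ jK)} /\
   (forall (P1 : {set {set 'I_m}}) (P2 : {set {set 'I_(n - m)}}),
      P1 \in PS mu -> P2 \in PS nu ->
      exists2 P, P \in P'S J :&: PS lam & phi J iJ jK P = (P1, P2))).
Proof.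
move=> sum_gt0 delta_min avgJ J_min _ iJ_incr J_im jK_incr JC_im sigma_iJ sigma_jK.
move=> lam' mu nu eps0.
have J0 : J != set0 by rewrite -card_gt0 (card_J_gt0 delta_min avgJ).
have [PordE Pord_dis] := setD_split (PordS lam) (Pord'S J).
have [PE P_dis] := setD_split (PS lam) (P'S J).
rewrite /lam' PordS_shift // PS_shift //.
split; [by move=> K; apply: sJ_shift_gt0 | split; [|split; [|split]]].
- do 4 (split => //); split; apply: card_setD_lt.
    exact: Pord'S_PordS_neq0 delta_min avgJ J_min sum_gt0.
  exact: P'S_PS_neq0 delta_min avgJ J_min sum_gt0.
- move=> s s'; split.
    exact (eps_phi_ord iJ_incr jK_incr J_im JC_im s' sigma_iJ sigma_jK).
  exact (eps'_phi_ord iJ_incr jK_incr J_im JC_im s').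
- split; [|split].
  + move=> s; exact (phi_ord_lam iJ_incr jK_incr J_im JC_im (sJ_compl_gt0 delta_min avgJ J_min)).
  + by move=> s t s' _ t' _; apply: phi_ord_inj.
  + move=> s1 s2 /[dup] s1_mu /andP[os1 _] /[dup] s2_nu /andP[os2 _].
    exists (glue iJ jK s1 s2); split; [exact: glue_ordpart' | | exact: phi_ord_glue].
    exact (glue_lam iJ_incr jK_incr J_im JC_im (sJ_J_gt0 delta_min avgJ) s1_mu s2_nu).
- split; [by move=> P; apply: phi_PS | split; last by move=> P1 P2; apply: phi_surj].
  by move=> P Q /setIP[P' _] /setIP[Q' _]; apply: phi_inj.
Qed.
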